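(* Let $G$ be a non-trivial connected graph, and let $k$ be a positive integer. Then $\dim_{k,f}(G)=1$ if and only if $G$ is isomorphic to the path $P_i$ for some $i\in\{2,3,\ldots,k+2\}$.
   Context: All graphs are finite, simple, undirected and connected; $P_i$ denotes the path on $i$ vertices. $d(x,y)$ is the length of a shortest $x$–$y$ path in $G$. For a positive integer $k$, $d_k(x,y)=\min\{d(x,y),k+1\}$ and $R_k\{x,y\}=\{z\in V(G): d_k(x,z)\neq d_k(y,z)\}$. For a function $g$ on $V(G)$ and $U\subseteq V(G)$, $g(U)=\sum_{s\in U}g(s)$. A function $h:V(G)\to[0,1]$ is a $k$-truncated resolving function of $G$ if $h(R_k\{x,y\})\ge 1$ for all distinct $x,y\in V(G)$. $\dim_{k,f}(G)=\min\{h(V(G)): h \text{ is a } k\text{-truncated resolving function of } G\}$. *)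

From HB Require Import structures.
From mathcomp Require Import all_boot all_order all_algebra.
From mathcomp Require Import reals.
Set Implicit Arguments. Unset Strict Implicit. Unset Printing Implicit Defensive.
Import Order.TTheory GRing.Theory Num.Theory.

Definition simple_graph (T : finType) (e : rel T) : Prop :=
  symmetric e /\ irreflexive e.
Definition connected_graph (T : finType) (e : rel T) : Prop :=
  forall x y : T, connect e x y.

Definition walkn (T : finType) (e : rel T) (n : nat) (x y : T) : bool :=
  [exists p : n.-tuple T, path e x p && (last x p == y)].

(* d(x,y): the least n with a walk of length n from x to y
   (for a connected graph this is < #|T|, so searching n in [0, #|T|) suffices) *)
Definition dist (T : finType) (e : rel T) (x y : T) : nat :=
  find (fun n => walkn e n x y) (iota 0 #|T|).

Definition dist_k (T : finType) (e : rel T) (k : nat) (x y : T) : nat :=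
  minn (dist e x y) k.+1.

Definition Rk (T : finType) (e : rel T) (k : nat) (x y : T) : {set T} :=
  [set z | dist_k e k x z != dist_k e k y z].

Definition k_trunc_resolving (R : realType) (T : finType) (e : rel T) (k : nat)
  (h : T -> R) : Prop :=
  (forall v, (0 <= h v)%R /\ (h v <= 1)%R) /\
  forall x y : T, x != y -> (1 <= \sum_(z in Rk e k x y) h z)%R.

Definition is_frac_trunc_dim (R : realType) (T : finType) (e : rel T) (k : nat)
  (r : R) : Prop :=
  (exists h : T -> R, k_trunc_resolving e k h /\ (\sum_(v : T) h v)%R = r) /\
  (forall h : T -> R, k_trunc_resolving e k h -> (r <= \sum_(v : T) h v)%R).

Definition path_rel (i : nat) : rel 'I_i :=
  fun a b => (a.+1 == b :> nat) || (b.+1 == a :> nat).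

Definition isomorphic_to_path (T : finType) (e : rel T) (i : nat) : Prop :=
  exists f : T -> 'I_i, bijective f /\ forall x y, e x y = path_rel (f x) (f y).

From HB Require Import structures.
From mathcomp Require Import all_boot all_order all_algebra.
From mathcomp Require Import reals.
From mathcomp Require Import lra zify.
Import Order.TTheory GRing.Theory Num.Theory.

Set Implicit Arguments.
Unset Strict Implicit.
Unset Printing Implicit Defensive.

(* A resolving function of total weight 1 gives positive weight to some vertex
   z, and then z must lie in every R_k{x,y}: the map x |-> d_k(x,z) is
   injective.  Conversely the indicator of such a vertex has weight 1, and no
   resolving function has weight below 1, so dim_{k,f}(G) = 1 exactly when G
   has such a "truncated landmark" z.  Injectivity of x |-> d(x,z) makes the
   distance layers around z singletons, so G is a path with z at an end, and
   since d_k takes at most k+2 values, G has at most k+2 vertices.  An end of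
   a path on at most k+2 vertices is a truncated landmark. *)

Section Distance.
Variables (T : finType) (e : rel T).

Lemma walkn_cons n x y z : e x y -> walkn e n y z -> walkn e n.+1 x z.
Proof.
move=> exy /existsP[t /andP[pt lt]]; apply/existsP; exists (cons_tuple y t).
by rewrite /= exy pt.
Qed.

Lemma walknS n x z : walkn e n.+1 x z -> exists2 y, e x y & walkn e n y z.
Proof.
case/existsP=> -[[|y s] hs] //= /andP[/andP[exy ps] ls].
by exists y => //; apply/existsP; exists (@Tuple n T s hs); rewrite /= ps.
Qed.

Lemma walkn0 x z : walkn e 0 x z -> x = z.
Proof. by case/existsP=> -[[|y s] hs] //= /eqP. Qed.

Lemma dist_le n x y : n < #|T| -> walkn e n x y -> dist e x y <= n.
Proof.
move=> hn hw; rewrite leqNgt; apply/negP => lt.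
by have := before_find 0 lt; rewrite nth_iota // add0n hw.
Qed.

Lemma dist_max x y : dist e x y <= #|T|.
Proof. by rewrite /dist -{2}(size_iota 0 #|T|) find_size. Qed.

Lemma connect_dist x y :
  connect e x y -> dist e x y < #|T| /\ walkn e (dist e x y) x y.
Proof.
case/connectP=> p pp ->; case/shortenP: pp => p' pp' up' _.
have short : size p' < #|T|.
  by have := max_card (mem (x :: p')); rewrite (card_uniqP up').
have walk : walkn e (size p') x (last x p').
  by apply/existsP; exists (in_tuple p'); rewrite /= pp' eqxx.
have found : has (fun n => walkn e n x (last x p')) (iota 0 #|T|).
  by apply/hasP; exists (size p'); rewrite ?mem_iota.
have lt : dist e x (last x p') < #|T| by rewrite has_find size_iota in found.
by split; last by have := nth_find 0 found; rewrite nth_iota ?add0n.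
Qed.

Hypothesis conn : connected_graph e.

Lemma dist_lt x y : dist e x y < #|T|.
Proof. by case: (connect_dist (conn x y)). Qed.

Lemma dist_eq0 x y : dist e x y = 0 -> x = y.
Proof. by case: (connect_dist (conn x y)) => _ + d0; rewrite d0 => /walkn0. Qed.

Lemma dist_refl x : dist e x x = 0.
Proof.
apply/eqP; rewrite -leqn0; apply: (@dist_le 0).
  by apply/card_gt0P; exists x.
by apply/existsP; exists [tuple] => /=.
Qed.

Lemma distS x z d : dist e x z = d.+1 -> exists2 y, e x y & dist e y z <= d.
Proof.
move=> dS; case: (connect_dist (conn x z)); rewrite dS => lt /walknS[y exy w].
by exists y => //; apply: dist_le (ltnW lt) w.
Qed.

Lemma dist_edge x y z : e x y -> dist e x z <= (dist e y z).+1.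
Proof.
move=> exy; case: (connect_dist (conn y z)) => _ w.
have [lt|ge] := ltnP (dist e y z).+1 #|T|; first exact: dist_le lt (walkn_cons exy w).
exact: leq_trans (dist_max x z) ge.
Qed.

Lemma potential_le_dist z (phi : T -> nat) :
  phi z = 0 -> (forall a b, e a b -> phi a <= (phi b).+1) ->
  forall x, phi x <= dist e x z.
Proof.
move=> phi_z phi_edge x.
suff : forall d x, dist e x z <= d -> phi x <= dist e x z by apply.
elim=> [|d IH] {}x; first by rewrite leqn0 => /eqP/dist_eq0 ->; rewrite phi_z.
case dx: (dist e x z) => [|d']; first by rewrite (dist_eq0 dx) phi_z.
rewrite ltnS => d'd; have [y exy dy] := distS dx.
apply: leq_trans (phi_edge _ _ exy) _; rewrite ltnS.
exact: leq_trans (IH y (leq_trans dy d'd)) dy.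
Qed.

Lemma dist_le_potential z (phi : T -> nat) :
  (forall x, phi x = 0 -> x = z) ->
  (forall x, 0 < phi x -> exists2 y, e x y & phi y = (phi x).-1) ->
  forall x, dist e x z <= phi x.
Proof.
move=> phi0 phi_down x; move Ephi: (phi x) => n.
elim: n x Ephi => [|n IH] x phix; first by rewrite (phi0 _ phix) dist_refl.
have [|y exy phiy] := phi_down x; first by rewrite phix.
apply: leq_trans (dist_edge z exy) _.
by rewrite ltnS IH // phiy phix.
Qed.

Hypothesis (e_sym : symmetric e) (e_irr : irreflexive e).

Lemma edgeE_dist_inj z x y :
  injective (dist e ^~ z) ->
  e x y = ((dist e x z).+1 == dist e y z) || ((dist e y z).+1 == dist e x z).
Proof.
move=> dinj; apply/idP/idP => [exy | /orP[] /eqP dS].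
- have := dist_edge z exy; have := dist_edge z (etrans (e_sym y x) exy).
  have : dist e x z != dist e y z.
    by apply: contraTneq exy => /dinj ->; rewrite e_irr.
  lia.
- have [w eyw dw] := distS (esym dS).
  suff -> : x = w by rewrite e_sym.
  by apply: dinj; apply/eqP; rewrite eqn_leq dw -ltnS dS dist_edge.
- have [w exw dw] := distS (esym dS).
  suff -> : y = w by [].
  by apply: dinj; apply/eqP; rewrite eqn_leq dw -ltnS dS dist_edge.
Qed.

Lemma path_of_dist_inj z :
  injective (dist e ^~ z) -> isomorphic_to_path e #|T|.
Proof.
move=> dinj; exists (fun x => Ordinal (dist_lt x z)); split.
  by apply: inj_card_bij; [move=> x y [/dinj] | rewrite card_ord].
by move=> x y; rewrite (edgeE_dist_inj _ _ dinj).
Qed.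

End Distance.

Lemma dist_path (T : finType) (e : rel T) (i : nat) (f : T -> 'I_i) (z : T) :
  connected_graph e -> bijective f -> (forall x y, e x y = path_rel (f x) (f y)) ->
  f z = 0 :> nat -> forall x, dist e x z = f x.
Proof.
move=> conn [g fK gK] ef fz x; apply/eqP; rewrite eqn_leq.
apply/andP; split; last first.
  apply: (potential_le_dist conn (phi := fun x => nat_of_ord (f x))) => // a b.
  by rewrite ef /path_rel => /orP[] /eqP; lia.
apply: (dist_le_potential conn (phi := fun x => nat_of_ord (f x))) => y fy.
  by apply: (can_inj fK); apply: val_inj; rewrite /= fy fz.
pose p := Ordinal (leq_ltn_trans (leq_pred (f y)) (ltn_ord (f y))).
exists (g p); last by rewrite gK.
by rewrite ef gK /path_rel /=; lia.
Qed.

Section Resolving.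
Variables (R : realType) (T : finType) (e : rel T) (k : nat).

Lemma resolving_sum_ge1 (h : T -> R) :
  1 < #|T| -> k_trunc_resolving e k h -> (1 <= \sum_v h v)%R.
Proof.
case/card_gt1P=> x [y [_ _ xy]] [h01 res]; apply: le_trans (res x y xy) _.
rewrite [leRHS](bigID [in Rk e k x y]) /= lerDl.
by apply: sumr_ge0 => v _; case: (h01 v).
Qed.

Lemma landmark_of_resolving_sum1 (h : T -> R) :
  k_trunc_resolving e k h -> (\sum_v h v = 1)%R ->
  exists z, injective (dist_k e k ^~ z).
Proof.
move=> [h01 res] sum1.
have [z /andP[_ hz]] : exists z, true && (0 < h z)%R.
  apply: psumr_neq0P; first by move=> v _; case: (h01 v).
  by rewrite sum1; exact/eqP/oner_neq0.
exists z => x y dxy; apply/eqP/contraT => xy.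
have zR : z \in Rk e k x y.
  apply: contraTT (res x y xy) => zNR; rewrite -ltNge.
  have : (0 <= \sum_(v | (v \notin Rk e k x y) && (v != z)) h v)%R.
    by apply: sumr_ge0 => v _; case: (h01 v).
  move: sum1; rewrite (bigID [in Rk e k x y]) /= [X in (_ + X)%R](bigD1 z) //=.
  lra.
by rewrite inE dxy eqxx in zR.
Qed.

Lemma resolving_landmark z :
  injective (dist_k e k ^~ z) -> k_trunc_resolving e k (fun v => (v == z)%:R : R)%R.
Proof.
move=> dinj; split=> [v | x y xy]; first by case: (v == z); rewrite ?ler01 ?lexx.
have zR : z \in Rk e k x y by rewrite inE; apply: contra xy => /eqP/dinj ->.
by rewrite (bigD1 z) //= eqxx big1 ?addr0 // => v /andP[_ /negbTE ->].
Qed.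

Lemma frac_trunc_dim1P :
  1 < #|T| -> is_frac_trunc_dim e k (1 : R) <-> exists z, injective (dist_k e k ^~ z).
Proof.
move=> T_gt1; split=> [[[h [res sum1]] _] | [z dinj]].
  exact: landmark_of_resolving_sum1 res sum1.
split=> [|h res]; last exact: resolving_sum_ge1.
exists (fun v => (v == z)%:R)%R; split; first exact: resolving_landmark.
by rewrite (bigD1 z) //= eqxx big1 ?addr0 // => v /negbTE ->.
Qed.

End Resolving.

Lemma card_le_of_dist_k_inj (T : finType) (e : rel T) (k : nat) (z : T) :
  injective (dist_k e k ^~ z) -> #|T| <= k.+2.
Proof.
move=> dinj.
pose d x : 'I_k.+2 := Ordinal (geq_minr (dist e x z) k.+1 : dist_k e k x z < k.+2).
by rewrite -[k.+2]card_ord; apply: (leq_card d) => x y [/dinj].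
Qed.

Lemma dist_inj_of_dist_k_inj (T : finType) (e : rel T) (k : nat) (z : T) :
  injective (dist_k e k ^~ z) -> injective (dist e ^~ z).
Proof. by move=> dinj x y dxy; apply: dinj; rewrite /dist_k dxy. Qed.

Lemma path_end_landmark (T : finType) (e : rel T) (k i : nat) :
  connected_graph e -> #|T| > 0 -> i <= k.+2 -> isomorphic_to_path e i ->
  exists z, injective (dist_k e k ^~ z).
Proof.
move=> conn /card_gt0P[x0 _] ik [f [fbij ef]].
have [g fK gK] := fbij.
pose z := g (Ordinal (leq_ltn_trans (leq0n _) (ltn_ord (f x0)))).
have dz := dist_path conn fbij ef (congr1 val (gK _) : f z = 0 :> nat).
exists z => x y; rewrite /dist_k !dz.
have := ltn_ord (f x); have := ltn_ord (f y).
by move=> ? ? fxy; apply: (can_inj fK); apply: val_inj => /=; lia.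
Qed.

Theorem theorem2p7 (R : realType) (T : finType) (e : rel T) (k : nat) :
  simple_graph e -> connected_graph e -> 1 < #|T| -> 0 < k ->
  is_frac_trunc_dim e k (1 : R) <->
  exists i : nat, 2 <= i <= k.+2 /\ isomorphic_to_path e i.
Proof.
move=> [e_sym e_irr] conn T_gt1 _; rewrite frac_trunc_dim1P //; split.
- case=> z dinj; exists #|T|; split.
    by rewrite T_gt1 (card_le_of_dist_k_inj dinj).
  exact: path_of_dist_inj conn e_sym e_irr z (dist_inj_of_dist_k_inj dinj).
- case=> i [/andP[_ ik] iso].
  exact: path_end_landmark conn (ltnW T_gt1) ik iso.
Qed.
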